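(* Suppose a graph $G$ has $k$ connected components $C_1,\dots,C_k$, all of size $n_0$. Let $G_{C_1},\dots,G_{C_k}$ be the subgraphs on these components and $L^i$ their random walk Laplacians, and let $L_G$ be the random walk Laplacian of $G$. Then for any $s<n_0$, $\delta_s(L_G)=\max_i\delta_s(L^i)$.
   Context: Random walk Laplacian $L=I-D^{-1}A$ with $A$ adjacency matrix and $D$ degree matrix. The restricted isometry constant $\delta_s(\Phi)$ is the smallest $\delta\ge0$ with $(1-\delta)\|x\|_2^2\le\|\Phi_Tx\|_2^2\le(1+\delta)\|x\|_2^2$ for all index sets $T$ with $|T|\le s$ and all $x$, where $\Phi_T$ is the column submatrix indexed by $T$. *)

From HB Require Import structures.
From mathcomp Require Import all_boot all_order all_algebra.
From mathcomp Require Import classical_sets reals.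
Set Implicit Arguments. Unset Strict Implicit.
 Unset Printing Implicit Defensive.
Import Order.TTheory GRing.Theory Num.Theory.
Local Open Scope ring_scope.

Definition simple_graph (N : nat) (e : rel 'I_N) : Prop :=
  symmetric e /\ irreflexive e.

Definition adjm (R : realType) (N : nat) (e : rel 'I_N) : 'M[R]_N :=
  \matrix_(i, j) (e i j)%:R.

Definition degree (R : realType) (N : nat) (A : 'M[R]_N) (i : 'I_N) : R :=
  \sum_j A i j.

(* random walk Laplacian L = I - D^{-1} A, entrywise:
   L i j = [i = j] - A i j / d_i   (convention x / 0 = 0 for isolated vertices) *)
Definition rwLap (R : realType) (N : nat) (A : 'M[R]_N) : 'M[R]_N :=
  \matrix_(i, j) ((i == j)%:R - A i j / degree A i).

Definition is_component (N : nat) (e : rel 'I_N) (C : {set 'I_N}) : Prop :=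
  exists x, C = [set y | connect e x y].

Definition induced {N : nat} (e : rel 'I_N) (S : {set 'I_N}) : rel 'I_#|S| :=
  fun a b => e (enum_val a) (enum_val b).

Definition sqnorm (R : realType) (m : nat) (v : 'cV[R]_m) : R :=
  \sum_i (v i 0) ^+ 2.

Definition colsubT (R : realType) (m n : nat) (Phi : 'M[R]_(m, n))
  (T : {set 'I_n}) : 'M[R]_(m, #|T|) :=
  colsub (fun j : 'I_#|T| => enum_val j) Phi.

Definition rip_holds (R : realType) (m n : nat) (Phi : 'M[R]_(m, n))
  (s : nat) (d : R) : Prop :=
  forall T : {set 'I_n}, (#|T| <= s)%N -> forall x : 'cV[R]_#|T|,
    (1 - d) * sqnorm x <= sqnorm (colsubT Phi T *m x) <= (1 + d) * sqnorm x.

Definition ric (R : realType) (m n : nat) (Phi : 'M[R]_(m, n)) (s : nat) : R :=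
  inf [set d : R | 0 <= d /\ rip_holds Phi s d].
Arguments induced {N} e S.

(* The random walk Laplacian of G is block diagonal along the connected
   components, and its diagonal blocks are the random walk Laplacians of the
   components, since a vertex has all its neighbours, hence its whole degree,
   inside its component.  For a block-diagonal matrix M, an s-sparse vector y
   splits into its restrictions to the blocks, each again s-sparse, and both
   ||y||^2 and ||M y||^2 are the sums of the blockwise quantities; hence d
   satisfies the RIP of order s for M iff it does for every block.  The RIC is
   the infimum of the admissible d >= 0, and the infimum of an intersection of
   upward-closed sets of nonnegative reals is the maximum of their infima. *)

From HB Require Import structures.
From mathcomp Require Import all_boot all_order all_algebra.
From mathcomp Require Import classical_sets reals.
From mathcomp Require Import lra.
Import Order.TTheory GRing.Theory Num.Theory.
Local Open Scope ring_scope.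
Set Implicit Arguments. Unset Strict Implicit.

Section SparseVectors.
Variable R : realType.

Definition supp n (y : 'cV[R]_n) : {set 'I_n} := [set j | y j 0 != 0].

Definition extend n (S : {set 'I_n}) (z : 'cV[R]_#|S|) : 'cV[R]_n :=
  colsub enum_val 1%:M *m z.
Arguments extend {n} S z.

Definition restrict n (S : {set 'I_n}) (y : 'cV[R]_n) : 'cV[R]_#|S| :=
  rowsub enum_val y.

Lemma sum_enum_val n (S : {set 'I_n}) (F : 'I_n -> R) :
  (forall j, j \notin S -> F j = 0) ->
  \sum_j F j = \sum_(a < #|S|) F (enum_val a).
Proof.
move=> F0; rewrite -(big_enum_val F) [RHS]big_mkcond /=.
by apply: eq_bigr => j _; case: ifPn => // /F0.
Qed.

Lemma extend_enum_val n (S : {set 'I_n}) z b : extend S z (enum_val b) 0 = z b 0.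
Proof.
rewrite mxE (bigD1 b) //= !mxE eqxx mul1r big1 ?addr0 // => a ab.
by rewrite !mxE (inj_eq enum_val_inj) eq_sym (negbTE ab) mul0r.
Qed.

Lemma extend_out n (S : {set 'I_n}) z j : j \notin S -> extend S z j 0 = 0.
Proof.
move=> jS; rewrite mxE big1 // => a _; rewrite !mxE.
by case: eqP => [ja|]; [move: jS; rewrite ja enum_valP | rewrite mul0r].
Qed.

Lemma restrict_enum_val n (S : {set 'I_n}) y b :
  restrict S y b 0 = y (enum_val b) 0.
Proof. by rewrite mxE. Qed.

Lemma extend_restrict n (S : {set 'I_n}) y :
  supp y \subset S -> extend S (restrict S y) = y.
Proof.
move=> /fintype.subsetP yS; apply/matrixP => j i; rewrite (ord1 i).
have [jS|jS] := boolP (j \in S); last first.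
  have : j \notin supp y by apply: contra jS => /yS.
  by rewrite inE negbK extend_out // => /eqP ->.
by rewrite -(enum_rankK_in jS jS) extend_enum_val restrict_enum_val.
Qed.

Lemma sqnorm_extend n (S : {set 'I_n}) z : sqnorm (extend S z) = sqnorm z.
Proof.
rewrite /sqnorm (sum_enum_val (S := S)) => [|j /extend_out ->]; last by rewrite expr0n.
by apply: eq_bigr => b _; rewrite extend_enum_val.
Qed.

Lemma card_supp_extend n (S : {set 'I_n}) z :
  (#|supp (extend S z)| <= #|supp z|)%N.
Proof.
rewrite -(card_imset _ enum_val_inj); apply: subset_leq_card.
apply/fintype.subsetP => j; rewrite inE.
have [jS|jS] := boolP (j \in S); last by rewrite extend_out ?eqxx.
by rewrite -(enum_rankK_in jS jS) extend_enum_val => z0; apply: imset_f; rewrite inE.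
Qed.

Lemma card_supp_restrict n (S : {set 'I_n}) y :
  (#|supp (restrict S y)| <= #|supp y|)%N.
Proof.
rewrite -(card_imset _ enum_val_inj); apply: subset_leq_card.
by apply/fintype.subsetP => j /imsetP[a]; rewrite !inE restrict_enum_val => ? ->.
Qed.

Lemma mul_colsubT m n (Phi : 'M[R]_(m, n)) (S : {set 'I_n}) x :
  colsubT Phi S *m x = Phi *m extend S x.
Proof. by rewrite /colsubT /extend mulmxA mulmx_colsub mulmx1. Qed.

Lemma sqnorm_ge0 n (y : 'cV[R]_n) : 0 <= sqnorm y.
Proof. by apply: sumr_ge0 => i _; rewrite sqr_ge0. Qed.

Lemma sqr_coord_le n (y : 'cV[R]_n) j : y j 0 ^+ 2 <= sqnorm y.
Proof.
by rewrite /sqnorm (bigD1 j) //= lerDl; apply: sumr_ge0 => i _; rewrite sqr_ge0.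
Qed.

Lemma normr_coordM_le n (y : 'cV[R]_n) j l : `|y j 0 * y l 0| <= sqnorm y.
Proof.
have := sqr_coord_le y j; have := sqr_coord_le y l.
rewrite normrM -(real_normK (num_real (y j 0))) -(real_normK (num_real (y l 0))).
have := normr_ge0 (y j 0); have := normr_ge0 (y l 0); nra.
Qed.

Definition sparse_rip m n (Phi : 'M[R]_(m, n)) (s : nat) (d : R) : Prop :=
  forall y : 'cV[R]_n, (#|supp y| <= s)%N ->
  (1 - d) * sqnorm y <= sqnorm (Phi *m y) <= (1 + d) * sqnorm y.

Lemma rip_holds_sparse m n (Phi : 'M[R]_(m, n)) s d :
  rip_holds Phi s d <-> sparse_rip Phi s d.
Proof.
split=> [rip y ys | srip T Ts x].
  have yT := extend_restrict (subxx (supp y)).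
  by rewrite -yT -mul_colsubT sqnorm_extend; apply: rip.
rewrite mul_colsubT -(sqnorm_extend (S := T) x); apply: srip.
by rewrite (leq_trans (card_supp_extend _)) // (leq_trans (max_card _)) ?card_ord.
Qed.

Lemma sparse_rip_le m n (Phi : 'M[R]_(m, n)) s d d' :
  sparse_rip Phi s d -> d <= d' -> sparse_rip Phi s d'.
Proof.
move=> srip dd' y ys; have /andP[lo hi] := srip y ys; have y0 := sqnorm_ge0 y.
by apply/andP; split; [apply: le_trans lo | apply: le_trans hi _]; nra.
Qed.

Lemma sqnorm_mulmx_le m n (Phi : 'M[R]_(m, n)) y :
  sqnorm (Phi *m y) <= (\sum_i \sum_j \sum_l `|Phi i j| * `|Phi i l|) * sqnorm y.
Proof.
rewrite mulr_suml; apply: ler_sum => i _.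
rewrite mxE expr2 !mulr_suml; apply: ler_sum => j _.
rewrite mulr_sumr mulr_suml; apply: ler_sum => l _.
rewrite (le_trans (ler_norm _)) // mulrACA normrM [`|Phi i j * _|]normrM.
by rewrite ler_wpM2l ?mulr_ge0 // normr_coordM_le.
Qed.

Lemma sparse_rip_exists m n (Phi : 'M[R]_(m, n)) s :
  exists d, 0 <= d /\ sparse_rip Phi s d.
Proof.
pose K := \sum_i \sum_j \sum_l `|Phi i j| * `|Phi i l|.
have K0 : 0 <= K by do 3!(apply: sumr_ge0 => ? _); rewrite mulr_ge0.
exists (1 + K); split=> [|y _]; first lra.
have := sqnorm_ge0 y; have := sqnorm_ge0 (Phi *m y); have := sqnorm_mulmx_le Phi y.
by rewrite -/K => *; apply/andP; split; nra.
Qed.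
End SparseVectors.
Arguments extend {R n} S z.

Lemma inf_setI_upclosed (R : realType) k (Q : 'I_k -> R -> Prop) :
  (forall i d d', Q i d -> d <= d' -> Q i d') ->
  (exists d, 0 <= d /\ forall i, Q i d) ->
  inf [set d | 0 <= d /\ forall i, Q i d] =
  \big[Num.max/0]_i inf [set d | 0 <= d /\ Q i d].
Proof.
move=> Qup [d0 [d0_ge0 Qd0]].
have D_ne i : ([set d | 0 <= d /\ Q i d] !=set0)%classic by exists d0.
have D_lb i : has_lbound [set d | 0 <= d /\ Q i d] by exists 0 => x [].
apply/eqP; rewrite eq_le; apply/andP; split; last first.
  apply: lb_le_inf => [|d [d_ge0 Qd]]; first by exists d0.
  by apply: bigmax_le => // i _; apply: ge_inf => //; split.
apply/ler_addgt0Pr => eps eps_gt0; apply: ge_inf; first by exists 0 => x [].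
split=> [|i]; first by rewrite addr_ge0 ?(ltW eps_gt0) //; apply: bigmax_ge_id.
have [d [_ Qd] d_lt] := inf_adherent eps_gt0 (conj (D_ne i) (D_lb i)).
by apply: Qup Qd _; rewrite ltW // (lt_le_trans d_lt) // lerD2r le_bigmax.
Qed.

Definition principal_submx (R : realType) n (S : {set 'I_n}) (M : 'M[R]_n) :
  'M[R]_#|S| :=
  mxsub enum_val enum_val M.
Arguments principal_submx {R n} S M.

Section BlockDiagonal.
Variables (R : realType) (N k : nat) (C : 'I_k -> {set 'I_N}) (M : 'M[R]_N).
Hypothesis C_cover : forall v, exists i, v \in C i.
Hypothesis C_disjoint : forall i j v, v \in C i -> v \in C j -> i = j.
Hypothesis M_offblock :
  forall i j u w, i != j -> u \in C i -> w \in C j -> M u w = 0.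

Local Notation M_ i := (principal_submx (C i) M).

Lemma M_out_of_block i u w :
  u \in C i -> w \notin C i -> M u w = 0 /\ M w u = 0.
Proof.
move=> uCi wCi; have [j wCj] := C_cover w.
have ij : i != j by apply: contraNneq wCi => ->.
by rewrite (M_offblock ij uCi wCj) (M_offblock _ wCj uCi) // eq_sym.
Qed.

Lemma mulmx_extend_block i z : M *m extend (C i) z = extend (C i) (M_ i *m z).
Proof.
apply/matrixP => w c; rewrite (ord1 c).
have [wCi|wCi] := boolP (w \in C i); last first.
  rewrite extend_out // mxE big1 // => v _.
  have [vCi|vCi] := boolP (v \in C i); last by rewrite extend_out ?mulr0.
  by rewrite (M_out_of_block vCi wCi).2 mul0r.
rewrite -(enum_rankK_in wCi wCi) extend_enum_val !mxE (sum_enum_val (S := C i)).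
  by apply: eq_bigr => a _; rewrite extend_enum_val !mxE.
by move=> v /extend_out ->; rewrite mulr0.
Qed.

Lemma restrict_mulmx_block i (y : 'cV[R]_N) :
  restrict (C i) (M *m y) = M_ i *m restrict (C i) y.
Proof.
apply/matrixP => b c; rewrite (ord1 c) !mxE (sum_enum_val (S := C i)).
  by apply: eq_bigr => a _; rewrite !mxE.
by move=> v vCi; rewrite (M_out_of_block (enum_valP b) vCi).1 mul0r.
Qed.

Lemma sum_over_blocks (F : 'I_N -> R) :
  \sum_w F w = \sum_i \sum_(b < #|C i|) F (enum_val b).
Proof.
transitivity (\sum_w \sum_i (w \in C i)%:R * F w).
  apply: eq_bigr => w _; have [i wCi] := C_cover w.
  rewrite (bigD1 i) //= wCi mul1r big1 ?addr0 // => j ji.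
  suff /negbTE-> : w \notin C j by rewrite mul0r.
  by apply: contra ji => wCj; rewrite (C_disjoint wCj wCi).
rewrite exchange_big; apply: eq_bigr => i _; rewrite (sum_enum_val (S := C i)).
  by apply: eq_bigr => b _; rewrite enum_valP mul1r.
by move=> w /negbTE ->; rewrite mul0r.
Qed.

Lemma sqnorm_blocks (y : 'cV[R]_N) : sqnorm y = \sum_i sqnorm (restrict (C i) y).
Proof.
rewrite /sqnorm (sum_over_blocks (fun w => y w 0 ^+ 2)).
by apply: eq_bigr => i _; apply: eq_bigr => b _; rewrite mxE.
Qed.

Lemma sparse_rip_blocks s d : sparse_rip M s d <-> forall i, sparse_rip (M_ i) s d.
Proof.
split=> [srip i z zs | srip y ys].
  rewrite -(sqnorm_extend (S := C i)) -[sqnorm (M_ i *m z)]sqnorm_extend.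
  by rewrite -mulmx_extend_block srip // (leq_trans (card_supp_extend _)).
rewrite [sqnorm y]sqnorm_blocks [sqnorm (M *m y)]sqnorm_blocks !mulr_sumr.
have srip_i i := srip i _ (leq_trans (card_supp_restrict (C i) y) ys).
by apply/andP; split; apply: ler_sum => i _;
  rewrite restrict_mulmx_block; case/andP: (srip_i i).
Qed.

Lemma ric_blocks s : ric M s = \big[Num.max/0]_i ric (M_ i) s.
Proof.
rewrite /ric -inf_setI_upclosed.
- congr inf; apply/seteqP; split=> d [d_ge0 rip]; split=> //.
    by move=> i; move/rip_holds_sparse/sparse_rip_blocks: rip => /(_ i)/rip_holds_sparse.
  by apply/rip_holds_sparse/sparse_rip_blocks => i; apply/rip_holds_sparse.
- move=> i d d' /rip_holds_sparse srip dd'.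
  by apply/rip_holds_sparse; apply: sparse_rip_le srip dd'.
- have [d [d_ge0 /sparse_rip_blocks srip]] := sparse_rip_exists M s.
  by exists d; split=> // i; apply/rip_holds_sparse.
Qed.
End BlockDiagonal.

Section RandomWalkLaplacian.
Variables (R : realType) (N : nat) (e : rel 'I_N).

Local Notation L := (rwLap (adjm R e)).

Lemma principal_submx_rwLap (S : {set 'I_N}) :
  closed e S -> principal_submx S L = rwLap (adjm R (induced e S)).
Proof.
move=> clS.
have degS b : degree (adjm R e) (enum_val b) = degree (adjm R (induced e S)) b.
  rewrite /degree (sum_enum_val (S := S)) => [|w wS].
    by apply: eq_bigr => a _; rewrite !mxE.
  by rewrite mxE; case: (boolP (e _ w)) => // /clS; rewrite enum_valP (negbTE wS).
by apply/matrixP => a b; rewrite !mxE (inj_eq enum_val_inj) degS.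
Qed.

Variables (k : nat) (C : 'I_k -> {set 'I_N}).
Hypotheses (e_sym : symmetric e) (C_inj : injective C).
Hypothesis C_comp : forall i, is_component e (C i).

Lemma component_closed i : closed e (C i).
Proof.
have [x ->] := C_comp i => u w euw; rewrite !inE.
exact: connect_closed (sym_connect_sym e_sym) _ _ _ euw.
Qed.

Lemma components_disjoint i j v : v \in C i -> v \in C j -> i = j.
Proof.
have [x Ci] := C_comp i; have [x' Cj] := C_comp j.
rewrite Ci Cj !inE => xv x'v; apply: C_inj; rewrite Ci Cj; apply/setP => y.
have sym := sym_connect_sym e_sym.
by rewrite !inE (same_connect sym xv) (same_connect sym x'v).
Qed.

Lemma rwLap_offblock i j u w : i != j -> u \in C i -> w \in C j -> L u w = 0.
Proof.
move=> ij uCi wCj; have wCi : w \notin C i.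
  by apply: contra ij => wCi; rewrite (components_disjoint wCi wCj).
have uw : u != w by apply: contraNneq wCi => <-.
have euw : ~~ e u w by apply: contra wCi => /(component_closed i) <-.
by rewrite !mxE (negbTE uw) (negbTE euw) mul0r subrr.
Qed.
End RandomWalkLaplacian.

Theorem mainTheorem8 (R : realType) (N k n0 : nat) (e : rel 'I_N)
  (C : 'I_k -> {set 'I_N}) (s : nat) :
  simple_graph e ->
  injective C ->
  (forall i, is_component e (C i)) ->
  (forall v : 'I_N, exists i, v \in C i) ->
  (forall i, #|C i| = n0) ->
  (s < n0)%N ->
  ric (rwLap (adjm R e)) s =
  \big[Num.max/0]_(i < k) ric (rwLap (adjm R (induced e (C i)))) s.
Proof.
move=> [e_sym _] C_inj C_comp C_cover _ _.
have blocks i :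
  rwLap (adjm R (induced e (C i))) = principal_submx (C i) (rwLap (adjm R e)).
  by rewrite principal_submx_rwLap //; exact: component_closed.
under eq_bigr do rewrite blocks.
by apply: ric_blocks => //; [exact: components_disjoint | exact: rwLap_offblock].
Qed.
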